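(* Let $G$ be a torsion abelian group and $\varphi\colon G\to G$ a surjective endomorphism that is positively expansive. Then there exists a finite subgroup $K\leq G$ such that for every finite subgroup $F\leq G$ there exists $m\in\mathbb N$ with $F\subseteq\varphi^mK$.
   Context: $\mathbb N=\{0,1,2,\dots\}$. An endomorphism $\varphi$ of an abelian group $G$ is positively expansive if there is a finite subgroup $S\leq G$ such that for every finite subgroup $F\leq G$ there is $n\in\mathbb N$ with $F\subseteq\sum_{k=0}^n\varphi^kS$. *)

From mathcomp Require Import all_boot all_algebra.
Set Implicit Arguments. Unset Strict Implicit. Unset Printing Implicit Defensive.
Import GRing.Theory.
Local Open Scope ring_scope.

Definition is_subgroup (G : zmodType) (S : G -> Prop) : Prop :=
  S 0 /\ (forall x y, S x -> S y -> S (x - y)).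

Definition finite_set (G : zmodType) (S : G -> Prop) : Prop :=
  exists s : seq G, forall x, S x <-> x \in s.

Definition finite_subgroup (G : zmodType) (S : G -> Prop) : Prop :=
  is_subgroup S /\ finite_set S.

Definition endo (G : zmodType) (phi : G -> G) : Prop :=
  forall x y, phi (x + y) = phi x + phi y.

Definition torsion (G : zmodType) : Prop :=
  forall x : G, exists n : nat, (0 < n)%N /\ x *+ n = 0.

Definition img_iter (G : zmodType) (phi : G -> G) (k : nat) (S : G -> Prop) : G -> Prop :=
  fun y => exists x, S x /\ y = iter k phi x.

Definition sum_iter (G : zmodType) (phi : G -> G) (n : nat) (S : G -> Prop) : G -> Prop :=
  fun y => exists f : nat -> G, (forall k, (k <= n)%N -> S (f k)) /\
                              y = \sum_(k < n.+1) iter k phi (f k).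

Definition psubset (G : Type) (A B : G -> Prop) : Prop := forall x, A x -> B x.

Definition pos_expansive (G : zmodType) (phi : G -> G) : Prop :=
  exists S : G -> Prop, finite_subgroup S /\
    forall F : G -> Prop, finite_subgroup F ->
      exists n : nat, psubset F (sum_iter phi n S).

From mathcomp Require Import all_boot all_algebra.
Set Implicit Arguments. Unset Strict Implicit. Unset Printing Implicit Defensive.
Import GRing.Theory.
Local Open Scope ring_scope.

(** Let S witness positive expansiveness and T_n := S + phi S + ... + phi^n S.
    As G is torsion, the phi-preimages of the elements of S can be chosen inside
    a finite subgroup, which lies in some T_N; hence S is contained in phi T_N,
    and then T_(n+1) = S + phi T_n is contained in phi T_n for every n >= N.
    Iterating, T_(N+n) is contained in phi^n T_N, so K := T_N works, since every
    finite subgroup lies in some T_n. *)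

Section FiniteSubgroups.
Variable G : zmodType.

Lemma subgroupD (H : G -> Prop) x y : is_subgroup H -> H x -> H y -> H (x + y).
Proof.
move=> [H0 HB] Hx Hy.
by have := HB x (0 - y) Hx (HB 0 y H0 Hy); rewrite sub0r opprK.
Qed.

Lemma finite_subgroup_adjoin (H : G -> Prop) (a : G) n :
  finite_subgroup H -> (0 < n)%N -> a *+ n = 0 ->
  exists H' : G -> Prop, finite_subgroup H' /\ H' a /\ psubset H H'.
Proof.
move=> [[H0 HB] [s Hs]] n_gt0 an0.
have mulrn_mod k : a *+ k = a *+ (k %% n).
  by rewrite {1}(divn_eq k n) mulrnDr mulnC mulrnA an0 mul0rn add0r.
have oppr_mulrn k : - (a *+ k) = a *+ (k * n.-1).
  apply/eqP; rewrite eq_sym -subr_eq0 opprK -mulrnDr -{2}(muln1 k) -mulnDr.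
  by rewrite addn1 prednK // mulnC mulrnA an0 mul0rn.
pose H' x := exists k h, H h /\ x = a *+ k + h.
exists H'; split; [split; [split|] | split].
- by exists 0%N, 0; rewrite mulr0n addr0.
- move=> _ _ [k [h [Hh ->]]] [k' [h' [Hh' ->]]].
  exists (k + k' * n.-1)%N, (h - h'); split; first exact: HB.
  by rewrite opprD oppr_mulrn addrACA mulrnDr.
- exists [seq a *+ i + y | i <- iota 0 n, y <- s] => x; split.
    move=> [k [h [Hh ->]]]; rewrite mulrn_mod.
    apply/allpairsP; exists (k %% n, h)%N => /=.
    by rewrite mem_iota ltn_pmod //; split=> //; apply/Hs.
  move=> /allpairsP [[i y] [_ /= /Hs Hy ->]]; by exists i, y.
- by exists 1%N, 0; rewrite addr0.
- by move=> h Hh; exists 0%N, h; rewrite mulr0n add0r.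
Qed.

Lemma torsion_seq_finite_subgroup (s : seq G) : torsion G ->
  exists H : G -> Prop, finite_subgroup H /\ forall x, x \in s -> H x.
Proof.
move=> torG; elim: s => [|a s [H [finH sH]]].
  exists (eq^~ 0); split=> //; split; last by exists [:: 0] => x; rewrite inE; split=> /eqP.
  by split=> // x y -> ->; rewrite subr0.
have [n [n_gt0 an0]] := torG a.
have [H' [finH' [H'a sHH']]] := finite_subgroup_adjoin finH n_gt0 an0.
by exists H'; split=> // x; rewrite inE => /predU1P [-> | /sH /sHH'].
Qed.

End FiniteSubgroups.

Lemma surj_map_seq (T U : Type) (f : T -> U) :
  (forall y, exists x, f x = y) -> forall s : seq U, exists t, map f t = s.
Proof.
move=> fsurj; elim=> [|y s [t <-]]; first by exists [::].
by have [x <-] := fsurj y; exists (x :: t).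
Qed.

Section SumIter.
Variables (G : zmodType) (phi : G -> G) (S : G -> Prop).
Hypotheses (phiD : endo phi) (subS : is_subgroup S).

Lemma endo0 : phi 0 = 0.
Proof. by apply: (@addrI _ (phi 0)); rewrite -phiD !addr0. Qed.

Lemma endoB x y : phi (x - y) = phi x - phi y.
Proof.
suff phiN : phi (- y) = - phi y by rewrite phiD phiN.
by apply/eqP; rewrite -subr_eq0 opprK -phiD addNr endo0.
Qed.

Lemma sum_iter0 y : sum_iter phi 0 S y <-> S y.
Proof.
split; first by move=> [f [Sf ->]]; rewrite big_ord1; apply: Sf.
by move=> Sy; exists (fun=> y); rewrite big_ord1.
Qed.

Lemma sum_iterS n y : sum_iter phi n.+1 S y <->
  exists a b, S a /\ sum_iter phi n S b /\ y = a + phi b.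
Proof.
have sum_iter_recl (f : nat -> G) : \sum_(k < n.+2) iter k phi (f k) =
    f 0%N + phi (\sum_(k < n.+1) iter k phi (f k.+1)).
  by rewrite big_ord_recl (big_morph phi phiD endo0).
split.
  move=> [f [Sf ->]]; exists (f 0%N), (\sum_(k < n.+1) iter k phi (f k.+1)).
  split; [exact: Sf | split; last exact: sum_iter_recl].
  by exists (f \o succn); split=> // k kn; exact: (Sf k.+1).
move=> [a [b [Sa [[g [Sg ->]] ->]]]].
pose f k := if k is k'.+1 then g k' else a.
by exists f; split; [case | rewrite (sum_iter_recl f)].
Qed.

Lemma is_subgroup_sum_iter n : is_subgroup (sum_iter phi n S).
Proof.
have [S0 SB] := subS; elim: n => [|n [T0 TB]].
  by split=> [|x y /sum_iter0 Sx /sum_iter0 Sy]; apply/sum_iter0; [|apply: SB].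
split; first by apply/sum_iterS; exists 0, 0; rewrite endo0 addr0.
move=> _ _ /sum_iterS [a [b [Sa [Tb ->]]]] /sum_iterS [a' [b' [Sa' [Tb' ->]]]].
apply/sum_iterS; exists (a - a'), (b - b'); do ! split; [exact: SB | exact: TB |].
by rewrite endoB opprD addrACA.
Qed.

Lemma finite_sum_iter n : finite_set S -> finite_set (sum_iter phi n S).
Proof.
move=> [s Ss]; elim: n => [|n [t Tt]].
  by exists s => x; split=> [/sum_iter0 /Ss | /Ss /sum_iter0].
exists [seq a + phi b | a <- s, b <- t] => x; split.
  move=> /sum_iterS [a [b [Sa [Tb ->]]]].
  by apply/allpairsP; exists (a, b); split; [apply/Ss | apply/Tt |].
move=> /allpairsP [[a b] [/= /Ss Sa /Tt Tb ->]].
by apply/sum_iterS; exists a, b.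
Qed.

Lemma sum_iter_subS n : psubset (sum_iter phi n S) (sum_iter phi n.+1 S).
Proof.
elim: n => [|n IH] x.
  move=> /sum_iter0 Sx; apply/sum_iterS; exists x, 0; do ! split=> //.
    by apply/sum_iter0; case: subS.
  by rewrite endo0 addr0.
by move=> /sum_iterS [a [b [Sa [/IH Tb ->]]]]; apply/sum_iterS; exists a, b.
Qed.

Lemma sum_iter_mono n m : (n <= m)%N -> psubset (sum_iter phi n S) (sum_iter phi m S).
Proof.
elim: m => [|m IH]; first by rewrite leqn0 => /eqP ->.
rewrite leq_eqVlt ltnS => /predU1P [-> // | /IH Tnm] x /Tnm.
exact: sum_iter_subS.
Qed.

Lemma sum_iterS_img n : psubset S (img_iter phi 1 (sum_iter phi n S)) ->
  psubset (sum_iter phi n.+1 S) (img_iter phi 1 (sum_iter phi n S)).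
Proof.
move=> S_img _ /sum_iterS [a [b [/S_img [x [Tx ->]] [Tb ->]]]].
exists (x + b); split; first exact: subgroupD (is_subgroup_sum_iter n) Tx Tb.
by rewrite /= phiD.
Qed.

Lemma sum_iter_img_iter N j : psubset S (img_iter phi 1 (sum_iter phi N S)) ->
  psubset (sum_iter phi (N + j) S) (img_iter phi j (sum_iter phi N S)).
Proof.
move=> S_img; elim: j => [|j IH] y; first by rewrite addn0; exists y.
rewrite addnS => /sum_iterS_img [].
  move=> a /S_img [x [Tx ->]]; exists x; split=> //.
  exact: sum_iter_mono (leq_addr j N) _ Tx.
by move=> x [/IH [z [Tz ->]] ->]; exists z.
Qed.

End SumIter.

Theorem lemma4p1 (G : zmodType) (phi : G -> G) :
  torsion G -> endo phi -> (forall y : G, exists x, phi x = y) ->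
  pos_expansive phi ->
  exists K : G -> Prop, finite_subgroup K /\
    forall F : G -> Prop, finite_subgroup F ->
      exists m : nat, psubset F (img_iter phi m K).
Proof.
move=> torG phiD phi_surj [S [[subS finS] expS]].
have [s Ss] := finS.
have [t phi_t] := surj_map_seq phi_surj s.
have [P [finP tP]] := torsion_seq_finite_subgroup t torG.
have [N PT] := expS P finP.
have S_img : psubset S (img_iter phi 1 (sum_iter phi N S)).
  move=> a /Ss; rewrite -phi_t => /mapP [x /tP /PT Tx ->]; by exists x.
exists (sum_iter phi N S); split.
  by split; [exact: is_subgroup_sum_iter | exact: finite_sum_iter].
move=> F /expS [n FT]; exists n => x /FT Tx.
apply: sum_iter_img_iter => //; exact: sum_iter_mono (leq_addl N n) _ Tx.
Qed.
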